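(* Let $G$ be an edge-ordered graph with average degree $d$, and suppose there is $0<\varepsilon<1$ such that every set of at most $\varepsilon d$ vertices of $G$ induces at most $(1/2-\varepsilon)d$ edges. Then $G$ has a monotone path of length $\varepsilon d$.
   Context: An edge-ordered graph is a graph together with a total order on its edge set. A path is monotone if its consecutive edges form a monotone sequence in this order; its length is the number of edges. *)

From HB Require Import structures.
From mathcomp Require Import all_boot all_order all_algebra.
Set Implicit Arguments. Unset Strict Implicit. Unset Printing Implicit Defensive.
Import Order.TTheory GRing.Theory Num.Theory.

Definition simple_graph (V : finType) (e : rel V) : Prop :=
  symmetric e /\ irreflexive e.

Definition edges (V : finType) (e : rel V) : {set {set V}} :=
  [set [set u; v] | u in V, v in V & e u v].

Definition induced_edges (V : finType) (e : rel V) (S : {set V}) : {set {set V}} :=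
  [set A in edges e | A \subset S].

(* A total order on the edge set, given by an injective rank function:
   lab u v is the rank of edge {u,v}; it is symmetric and distinct edges
   receive distinct ranks. *)
Definition edge_order (V : finType) (e : rel V) (lab : V -> V -> nat) : Prop :=
  (forall u v, lab u v = lab v u) /\
  (forall u v x y, e u v -> e x y -> lab u v = lab x y ->
     [set u; v] = [set x; y]).

Definition avg_degree (R : realFieldType) (V : finType) (e : rel V) : R :=
  (2 * #|edges e|)%:R / #|V|%:R.

(* A monotone path of length k: a sequence of k+1 distinct vertices,
   consecutive ones adjacent, whose consecutive edges have monotone
   (increasing or decreasing) ranks. *)
Definition monotone_path (V : finType) (e : rel V) (lab : V -> V -> nat)
    (p : seq V) : Prop :=
  match p with
  | [::] => False
  | x :: s => [/\ uniq p, path e x s &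
                 sorted ltn (pairmap lab x s) \/ sorted gtn (pairmap lab x s)]
  end.

Definition path_length (V : Type) (p : seq V) : nat := (size p).-1.

From HB Require Import structures.
From mathcomp Require Import all_boot all_order all_algebra.
From mathcomp Require Import zify lra.
Import Order.TTheory GRing.Theory Num.Theory.

(* Reveal the edges one at a time in increasing rank, keeping at every vertex
   v a path v :: T v along which the ranks decrease away from v.  When the
   edge uv is revealed and neither endpoint lies on the other's path, u and v
   exchange their paths and prepend themselves, which adds two to the total
   path length.  Otherwise the edge is charged to the endpoint whose path
   contains the other one.  Thus 2|E| + sum_v |T v| = 2 sum_v |A v|, where
   A v is the set of edges charged to v; all of them lie inside v :: T v, so
   2|E| <= sum_v (2 e(T v) + |T v|), where e(X) counts the edges inside X.
   If every path had fewer than eps d edges, the sparseness hypothesis would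
   give e(T v) <= (1/2 - eps) d, hence d |V| <= (1 - eps) d |V|, which is
   absurd. *)

Set Implicit Arguments.
Unset Strict Implicit.
Unset Printing Implicit Defensive.

Lemma bigD2 (R : Type) (idx : R) {op : Monoid.com_law idx} (I : finType)
    {F : I -> R} (u v : I) : u != v ->
  \big[op/idx]_i F i =
    op (op (F u) (F v)) (\big[op/idx]_(i | (i != u) && (i != v)) F i).
Proof. by move=> ne_uv; rewrite (bigD1 u) // (bigD1 v) 1?eq_sym //= Monoid.mulmA. Qed.

Section DecreasingPaths.
Variables (V : finType) (e : rel V) (lab : V -> V -> nat).
Hypotheses (e_sym : symmetric e) (e_irr : irreflexive e).
Hypothesis lab_sym : forall u v, lab u v = lab v u.
Hypothesis lab_inj : forall u v x y, e u v -> e x y -> lab u v = lab x y ->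
  [set u; v] = [set x; y].

Lemma mem_edges x y : e x y -> [set x; y] \in edges e.
Proof. by move=> exy; apply/imset2P; exists x y; rewrite ?inE. Qed.

Lemma edgesP E : reflect (exists x y, E = [set x; y] /\ e x y) (E \in edges e).
Proof.
apply: (iffP idP) => [/imset2P[x y _] | [x [y [-> exy]]]]; last exact: mem_edges exy.
by rewrite inE => /andP[_ exy] ->; exists x, y.
Qed.

Lemma lab_set2 x y u v : e x y -> [set x; y] = [set u; v] -> lab x y = lab u v.
Proof.
move=> exy xy_uv; have : x != y by apply: contraTneq exy => ->; rewrite e_irr.
have /set2P[] : x \in [set u; v] by rewrite -xy_uv set21.
all: have /set2P[] : y \in [set u; v] by rewrite -xy_uv set22.
all: by move=> -> ->; rewrite ?eqxx // lab_sym.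
Qed.

Definition edges_below t :=
  [set [set x; y] | x in V, y in V & e x y && (lab x y < t)].

Lemma edges_belowP t E :
  reflect (exists x y, [/\ E = [set x; y], e x y & lab x y < t]) (E \in edges_below t).
Proof.
apply: (iffP imset2P) => [[x y _] | [x [y [-> exy lt_xy]]]].
  by rewrite inE => /andP[_ /andP[exy lt_xy]] ->; exists x, y.
by exists x y; rewrite ?inE ?exy.
Qed.

Lemma mem_edges_below t x y : e x y -> ([set x; y] \in edges_below t) = (lab x y < t).
Proof.
move=> exy; apply/edges_belowP/idP => [[u [v [/(lab_set2 exy) -> _ //]]] | lt_xy].
by exists x, y.
Qed.

Lemma edges_below0 : edges_below 0 = set0.
Proof. by apply/setP=> E; rewrite inE; apply/edges_belowP=> -[x [y []]]. Qed.

Lemma edges_belowS t : edges_below t \subset edges_below t.+1.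
Proof.
apply/subsetP=> E /edges_belowP[x [y [-> exy lt_xy]]].
by rewrite mem_edges_below // leqW.
Qed.

Lemma edges_below_new t u v : e u v -> lab u v = t ->
  edges_below t.+1 = [set u; v] |: edges_below t.
Proof.
move=> euv <-; apply/setP=> E; rewrite in_setU1.
apply/idP/predU1P => [/edges_belowP[x [y [-> exy]]] | [-> | E_t]].
- rewrite ltnS leq_eqVlt => /predU1P[l_xy | lt_xy]; first by left; apply: lab_inj.
  by right; rewrite mem_edges_below.
- by rewrite mem_edges_below.
- exact: subsetP (edges_belowS _) _ E_t.
Qed.

Lemma card_edges_below_new t u v : e u v -> lab u v = t ->
  #|edges_below t.+1| = #|edges_below t|.+1.
Proof.
move=> euv luv; rewrite (edges_below_new euv luv) cardsU1.
by rewrite mem_edges_below // luv ltnn.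
Qed.

Lemma edges_below_idle t : (forall x y, e x y -> lab x y != t) ->
  edges_below t.+1 = edges_below t.
Proof.
move=> no_t; apply/eqP; rewrite eqEsubset edges_belowS andbT.
apply/subsetP=> E /edges_belowP[x [y [-> exy]]].
by rewrite ltnS leq_eqVlt (negbTE (no_t x y exy)) mem_edges_below.
Qed.

Lemma edges_sub_below : edges e \subset edges_below (\max_(p : V * V) lab p.1 p.2).+1.
Proof.
apply/subsetP=> E /edgesP[x [y [-> exy]]].
by rewrite mem_edges_below // ltnS (leq_bigmax (x, y)).
Qed.

Lemma induced_edgesS (S S' : {set V}) : S \subset S' ->
  induced_edges e S \subset induced_edges e S'.
Proof.
move=> sub_SS'; apply/subsetP=> E; rewrite !inE => /andP[-> E_S].
exact: subset_trans sub_SS'.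
Qed.

Lemma induced_edgesU1 x (S : {set V}) :
  induced_edges e (x |: S) \subset induced_edges e S :|: [set [set x; y] | y in S].
Proof.
apply/subsetP=> E; rewrite inE => /andP[/edgesP[a [b [-> eab]]] ab_xS].
rewrite in_setU; apply/orP; move: eab.
have /setU1P[] : a \in x |: S by apply: (subsetP ab_xS); rewrite set21.
all: have /setU1P[] : b \in x |: S by apply: (subsetP ab_xS); rewrite set22.
- by move=> -> ->; rewrite e_irr.
- by move=> b_S -> _; right; apply/imsetP; exists b.
- by move=> -> a_S _; right; apply/imsetP; exists a; rewrite // setUC.
- move=> b_S a_S eab; left; rewrite inE mem_edges //.
  by apply/subsetP=> z /set2P[] ->.
Qed.

Lemma card_induced_edgesU1 x (S : {set V}) :
  (#|induced_edges e (x |: S)| <= #|induced_edges e S| + #|S|)%N.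
Proof.
apply: leq_trans (subset_leq_card (induced_edgesU1 x S)) _.
by apply: leq_trans (leq_card_setU _ _).1 _; rewrite leq_add2l leq_imset_card.
Qed.

Definition desc_path t v (s : seq V) :=
  [/\ uniq (v :: s), path e v s & path gtn t (pairmap lab v s)].

Lemma desc_pathS t v s : desc_path t v s -> desc_path t.+1 v s.
Proof.
case=> uniq_vs e_vs lab_vs; split=> //.
exact: (path_le (leT := gtn) (rev_trans ltn_trans) (ltnSn t) lab_vs).
Qed.

Lemma desc_path_cons t u v s : e u v -> lab u v = t -> u \notin v :: s ->
  desc_path t v s -> desc_path t.+1 u (v :: s).
Proof.
move=> euv luv u_vs [uniq_vs e_vs lab_vs].
by split; rewrite /= ?u_vs ?euv ?luv ?ltnSn.
Qed.

Lemma desc_path_monotone t v s : desc_path t v s -> monotone_path e lab (v :: s).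
Proof. by case=> uniq_vs e_vs /path_sorted lab_vs; split=> //; right. Qed.

Definition charged t (S : {set V}) (B : {set {set V}}) :=
  B \subset induced_edges e S :&: edges_below t.

Lemma chargedS t S B : charged t S B -> charged t.+1 S B.
Proof. by move/subset_trans; apply; apply: setIS (edges_belowS t). Qed.

Lemma chargedU1 t (S S' : {set V}) B u v :
  S \subset S' -> u \in S' -> v \in S' -> e u v -> lab u v = t ->
  charged t S B -> charged t.+1 S' ([set u; v] |: B).
Proof.
move=> sub_SS' u_S' v_S' euv luv B_S.
rewrite /charged subUset sub1set; apply/andP; split.
  rewrite in_setI mem_edges_below ?luv // ltnSn andbT inE mem_edges //=.
  by apply/subsetP=> z /set2P[] ->.
by apply: subset_trans B_S _; apply: setISS (induced_edgesS _) (edges_belowS _).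
Qed.

Lemma charged_notin t S B u v : e u v -> lab u v = t -> charged t S B ->
  [set u; v] \notin B.
Proof.
move=> euv <- B_S; apply: contraTN isT => /(subsetP B_S).
by rewrite inE mem_edges_below // ltnn andbF.
Qed.

Lemma card_charged t x s B : charged t [set:: x :: s] B ->
  (#|B| <= #|induced_edges e [set:: s]| + size s)%N.
Proof.
move=> B_xs; apply: leq_trans (subset_leq_card (subset_trans B_xs (subsetIl _ _))) _.
rewrite set_cons; apply: leq_trans (card_induced_edgesU1 _ _) _.
by rewrite leq_add2l cardsE card_size.
Qed.

(* After the edges of rank < t are revealed, v :: T v is the path held at v
   and A v the set of revealed edges charged to v. *)
Definition walk_inv t (T : V -> seq V) (A : V -> {set {set V}}) :=
  [/\ forall v, desc_path t v (T v),
      forall v, charged t [set:: v :: T v] (A v) &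
      (\sum_v 2 * #|A v| = 2 * #|edges_below t| + \sum_v size (T v))%N].

Lemma walk_inv0 : walk_inv 0 (fun=> [::]) (fun=> set0).
Proof. by split=> [v | v | ]; rewrite /charged ?sub0set ?edges_below0 ?cards0 ?big1. Qed.

Lemma walk_inv_idle t T A : (forall x y, e x y -> lab x y != t) ->
  walk_inv t T A -> walk_inv t.+1 T A.
Proof.
move=> no_t [desc_T charged_A sum_eq]; rewrite /walk_inv /charged edges_below_idle //.
by split=> // v; apply: desc_pathS.
Qed.

Definition add_charge (A : V -> {set {set V}}) u v w :=
  if w == u then [set u; v] |: A u else A w.

Lemma walk_inv_charge t T A u v : e u v -> lab u v = t -> v \in T u ->
  walk_inv t T A -> walk_inv t.+1 T (add_charge A u v).
Proof.
move=> euv luv v_Tu [desc_T charged_A sum_eq]; split=> [w | w | ].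
- exact: desc_pathS.
- rewrite /add_charge; case: eqP => [-> | _]; last exact: chargedS.
  by apply: chargedU1 (charged_A u); rewrite ?inE ?eqxx ?v_Tu ?orbT.
rewrite (bigD1 u) //= /add_charge eqxx cardsU1.
rewrite (charged_notin euv luv (charged_A u)).
rewrite (eq_bigr (fun w => 2 * #|A w|)%N) => [|w /negbTE -> //].
move: sum_eq; rewrite (bigD1 u) //= (card_edges_below_new euv luv) => sum_eq.
by rewrite mulnDr muln1 -addnA sum_eq mulnS addnA.
Qed.

Definition swap_paths (T : V -> seq V) u v w :=
  if w == u then v :: T v else if w == v then u :: T u else T w.

Definition swap_charges (A : V -> {set {set V}}) u v w :=
  if w == u then [set u; v] |: A v else if w == v then [set u; v] |: A u else A w.

Lemma walk_inv_swap t T A u v : e u v -> lab u v = t -> v \notin T u -> u \notin T v ->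
  walk_inv t T A -> walk_inv t.+1 (swap_paths T u v) (swap_charges A u v).
Proof.
move=> euv luv v_Tu u_Tv [desc_T charged_A sum_eq].
have ne_uv : u != v by apply: contraTneq euv => ->; rewrite e_irr.
have evu : e v u by rewrite e_sym.
have lvu : lab v u = t by rewrite lab_sym.
split=> [w | w | ].
- rewrite /swap_paths; case: eqP => [-> | _].
    by apply: desc_path_cons; rewrite // inE negb_or ne_uv.
  case: eqP => [-> | _]; last exact: desc_pathS.
  by apply: desc_path_cons; rewrite // inE negb_or eq_sym ne_uv.
- rewrite /swap_paths /swap_charges; case: eqP => [-> | _].
    apply: chargedU1 (charged_A v) => //;
      by rewrite ?[[set:: u :: _]]set_cons ?subsetUr ?inE ?eqxx ?orbT.
  case: eqP => [-> | _]; last exact: chargedS.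
  rewrite [[set u; v]]setUC; apply: chargedU1 (charged_A u) => //;
    by rewrite ?[[set:: v :: _]]set_cons ?subsetUr ?inE ?eqxx ?orbT.
have off_A : \sum_(w | (w != u) && (w != v)) 2 * #|swap_charges A u v w| =
             \sum_(w | (w != u) && (w != v)) 2 * #|A w|.
  by apply: eq_bigr => w /andP[/negbTE wu /negbTE wv]; rewrite /swap_charges wu wv.
have off_T : \sum_(w | (w != u) && (w != v)) size (swap_paths T u v w) =
             \sum_(w | (w != u) && (w != v)) size (T w).
  by apply: eq_bigr => w /andP[/negbTE wu /negbTE wv]; rewrite /swap_paths wu wv.
rewrite !(bigD2 ne_uv) off_A off_T (card_edges_below_new euv luv).
move: sum_eq; rewrite !(bigD2 ne_uv) /swap_charges /swap_paths.
rewrite eqxx eq_sym (negbTE ne_uv) eqxx !cardsU1.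
rewrite (charged_notin euv luv (charged_A u)) (charged_notin euv luv (charged_A v)) /=.
lia.
Qed.

Lemma walk_invS t T A : walk_inv t T A -> exists T' A', walk_inv t.+1 T' A'.
Proof.
move=> inv; case: (pickP (fun p : V * V => e p.1 p.2 && (lab p.1 p.2 == t))); last first.
  move=> no_t; exists T, A; apply: walk_inv_idle inv => x y exy.
  by have := no_t (x, y); rewrite /= exy => /negbT.
move=> [u v] /andP[/= euv /eqP luv].
have [v_Tu | v_Tu] := boolP (v \in T u).
  by exists T, (add_charge A u v); apply: walk_inv_charge euv luv v_Tu inv.
have [u_Tv | u_Tv] := boolP (u \in T v).
  have evu : e v u by rewrite e_sym.
  have lvu : lab v u = t by rewrite lab_sym.
  by exists T, (add_charge A v u); apply: walk_inv_charge evu lvu u_Tv inv.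
exists (swap_paths T u v), (swap_charges A u v).
exact: walk_inv_swap euv luv v_Tu u_Tv inv.
Qed.

Lemma exists_walk_inv t : exists T A, walk_inv t T A.
Proof.
elim: t => [|t [T [A /walk_invS //]]].
by exists (fun=> [::]), (fun=> set0); apply: walk_inv0.
Qed.

Lemma monotone_paths_cover_edges : exists T : V -> seq V,
  (forall v, monotone_path e lab (v :: T v)) /\
  (2 * #|edges e| <= \sum_v (2 * #|induced_edges e [set:: T v]| + size (T v)))%N.
Proof.
have [T [A [desc_T charged_A sum_eq]]] :=
  exists_walk_inv (\max_(p : V * V) lab p.1 p.2).+1.
exists T; split=> [v | ]; first exact: desc_path_monotone (desc_T v).
rewrite -(leq_add2r (\sum_v size (T v))) -big_split /=.
apply: (@leq_trans (\sum_v 2 * #|A v|)).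
  by rewrite sum_eq leq_add2r leq_mul2l subset_leq_card ?orbT // edges_sub_below.
apply: leq_sum => v _; rewrite -addnA addnn -mul2n -mulnDr leq_mul2l.
by rewrite (card_charged (charged_A v)) orbT.
Qed.

End DecreasingPaths.

Local Open Scope ring_scope.

Lemma exists_large_by_averaging (R : realFieldType) (I : finType) (a b : I -> nat)
    (d eps : R) :
  (0 < #|I|)%N -> 0 < eps ->
  (forall i, (b i)%:R < eps * d -> (a i)%:R <= (2^-1 - eps) * d) ->
  d * #|I|%:R <= \sum_i (2 * a i + b i)%N%:R ->
  exists i, eps * d <= (b i)%:R.
Proof.
move=> I_gt0 eps_gt0 small_a dense.
have [i long | short] := pickP [pred i | eps * d <= (b i)%:R]; first by exists i.
have {}short i : (b i)%:R < eps * d by rewrite ltNge; apply: negbT (short i).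
have /card_gt0P[i0 _] := I_gt0.
have epsd_gt0 : 0 < eps * d := le_lt_trans (ler0n _ _) (short i0).
have : \sum_i ((2 * a i + b i)%N%:R : R) <= \sum_(i : I) (1 - eps) * d.
  apply: ler_sum => i _; rewrite natrD natrM.
  by have := small_a i (short i); have := short i; lra.
rewrite sumr_const -mulr_natr => /(le_trans dense).
have : 0 < eps * d * #|I|%:R by rewrite mulr_gt0 // ltr0n.
lra.
Qed.

Lemma avg_degreeE (R : realFieldType) (V : finType) (e : rel V) : (0 < #|V|)%N ->
  avg_degree R e * #|V|%:R = (2 * #|edges e|)%:R.
Proof. by move=> V_gt0; rewrite /avg_degree mulfVK // pnatr_eq0 -lt0n. Qed.

Theorem proposition5p1 (R : realFieldType) (V : finType) (e : rel V)
    (lab : V -> V -> nat) (eps : R) :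
  simple_graph e -> edge_order e lab -> (0 < #|V|)%N ->
  0 < eps -> eps < 1 ->
  (forall S : {set V}, #|S|%:R <= eps * avg_degree R e ->
     #|induced_edges e S|%:R <= (2^-1 - eps) * avg_degree R e) ->
  exists p : seq V, monotone_path e lab p /\
    eps * avg_degree R e <= (path_length p)%:R.
Proof.
move=> [e_sym e_irr] [lab_sym lab_inj] V_gt0 eps_gt0 _ sparse.
have [T [mono_T dense]] := monotone_paths_cover_edges e_sym e_irr lab_sym lab_inj.
set d := avg_degree R e in sparse *.
have sparse_T v : (size (T v))%:R < eps * d ->
    #|induced_edges e [set:: T v]|%:R <= (2^-1 - eps) * d.
  move=> short; apply: sparse; apply: le_trans (ltW short).
  by rewrite ler_nat cardsE card_size.
have dense_R : d * #|V|%:R <=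
    \sum_v (2 * #|induced_edges e [set:: T v]| + size (T v))%N%:R.
  by rewrite avg_degreeE // -natr_sum ler_nat.
have [v long] := exists_large_by_averaging V_gt0 eps_gt0 sparse_T dense_R.
by exists (v :: T v).
Qed.
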